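(* Define $h:\mathbb N\to\mathbb N$ by $$h(n)=\begin{cases}\lfloor\varphi n\rfloor, & n\in R_{2,0}\cup R_{1,0},\\ \lfloor(\varphi-1) n+2\rfloor, & n\in R_{2,2},\\ \lfloor(\varphi-1) n-1\rfloor, & n\in R_{3,1}.\end{cases}$$ Then $h$ is an $R_{i,j}$-permutation of $\mathbb N$ of order $4$ (first values $2,3,4,1,8,5,11,12,7,16,\dots$). Moreover its powers are $R_{i,j}$-permutations given by $$h^2(n)=\begin{cases}\lfloor(\varphi+1) n-1\rfloor, & n\in R_{1,0},\\ n+2, & n\in R_{2,2},\\ n-2, & n\in R_{2,0},\\ \lfloor(2-\varphi) n+1\rfloor, & n\in R_{3,1},\end{cases}\qquad h^3(n)=h^{-1}(n)=\begin{cases}\lfloor\varphi n+3\rfloor, & n\in R_{2,2},\\ \lfloor\varphi n-2\rfloor, & n\in R_{1,0},\\ \lfloor(\varphi-1) n+1\rfloor, & n\in R_{3,1}\cup R_{2,0}.\end{cases}$$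
   Context: $\mathbb N=\{1,2,\dots\}$, $\varphi=\frac{1+\sqrt5}{2}$, $F$ the Fibonacci numbers ($F(0)=0,F(1)=F(2)=1$). For $i\in\mathbb Z^{\ge0},j\in\mathbb Z$, $R_{i,j}$ is the range of $n\mapsto F(i+1)\lfloor n\varphi\rfloor+F(i)n-j$, $n\in\mathbb N$. An $R_{i,j}$-permutation is a permutation $\pi$ of $\mathbb N$ defined piecewise on a finite partition of $\mathbb N$ into sets $R_{i,j}$, with $\pi(n)=\lfloor(a\varphi+b)n+c\rfloor$ on each piece for integers $a,b,c$ depending on the piece. Powers denote iterated composition. *)

From Stdlib Require Import Reals Lra Lia ZArith Arith List ClassicalDescription.
Open Scope R_scope.

Definition phi : R := (1 + sqrt 5) / 2.

(* floor of a real number, as an integer: up x is the unique integer with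
   x < up x <= x + 1, so up x - 1 = floor x. *)
Definition floorR (x : R) : Z := (up x - 1)%Z.

Fixpoint F (n : nat) : nat :=
  match n with
  | O => O
  | S n' => match n' with
            | O => 1%nat
            | S n'' => (F n' + F n'')%nat
            end
  end.

Definition Rset (i : nat) (j : Z) (x : Z) : Prop :=
  exists m : nat, (1 <= m)%nat /\
    x = (Z.of_nat (F (S i)) * floorR (INR m * phi) + Z.of_nat (F i) * Z.of_nat m - j)%Z.

(* A piece: indices (i,j) of the set R_{i,j} and integer coefficients (a,b,c) of
   the formula n |-> floor((a phi + b) n + c). *)
Definition piece : Type := ((nat * Z) * (Z * Z * Z))%type.

Definition piece_set (p : piece) : Z -> Prop := Rset (fst (fst p)) (snd (fst p)).

Definition is_partition_of_N (P : list piece) : Prop :=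
  (forall n : nat, (1 <= n)%nat -> exists p, In p P /\ piece_set p (Z.of_nat n)) /\
  (forall p, In p P -> forall x : Z, piece_set p x -> (1 <= x)%Z) /\
  (forall k1 k2 : nat, (k1 < length P)%nat -> (k2 < length P)%nat -> k1 <> k2 ->
     forall (d : piece) (x : Z),
       ~ (piece_set (nth k1 P d) x /\ piece_set (nth k2 P d) x)).

(* pi is a permutation of N = {1,2,...} (values at 0 are irrelevant) *)
Definition perm_N (pi : nat -> nat) : Prop :=
  (forall n, (1 <= n)%nat -> (1 <= pi n)%nat) /\
  (forall n m, (1 <= n)%nat -> (1 <= m)%nat -> pi n = pi m -> n = m) /\
  (forall m, (1 <= m)%nat -> exists n, (1 <= n)%nat /\ pi n = m).

Definition piece_formula (p : piece) (n : nat) : Z :=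
  let '(_, (a, b, c)) := p in
  floorR ((IZR a * phi + IZR b) * INR n + IZR c).

Definition RPerm (pi : nat -> nat) : Prop :=
  perm_N pi /\
  exists P : list piece, is_partition_of_N P /\
    forall p, In p P -> forall n : nat, (1 <= n)%nat ->
      piece_set p (Z.of_nat n) -> Z.of_nat (pi n) = piece_formula p n.

Definition fpow (pi : nat -> nat) (k : nat) : nat -> nat := fun n => Nat.iter k pi n.

Definition has_order (pi : nat -> nat) (k : nat) : Prop :=
  (1 <= k)%nat /\
  (forall n, (1 <= n)%nat -> fpow pi k n = n) /\
  (forall l, (1 <= l)%nat -> (l < k)%nat -> exists n, (1 <= n)%nat /\ fpow pi l n <> n).

Definition inR (i : nat) (j : Z) (n : nat) : Prop := Rset i j (Z.of_nat n).

(* The map h of the statement (value 0 outside the four sets; never used on N). *)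
Definition h (n : nat) : nat :=
  if excluded_middle_informative (inR 2 0 n \/ inR 1 0 n) then
    Z.to_nat (floorR (phi * INR n))
  else if excluded_middle_informative (inR 2 2 n) then
    Z.to_nat (floorR ((phi - 1) * INR n + 2))
  else if excluded_middle_informative (inR 3 1 n) then
    Z.to_nat (floorR ((phi - 1) * INR n - 1))
  else 0%nat.

(* Write a(m) = floor(m phi) and b(m) = a(m) + m for the lower and upper Wythoff sequences.
   As phi is irrational and 1/phi + 1/phi^2 = 1, a and b are increasing with complementary
   ranges (Beatty), and a(a(m)) = b(m) - 1, a(b(m)) = a(m) + b(m).  Splitting N into a(N)
   and b(N), then a(N) and aa(N) in the same way, writes N as the disjoint union of aaa(N),
   b(N), ab(N), aab(N), and these four sets are R_{2,2}, R_{1,0}, R_{2,0}, R_{3,1}: with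
   a = a(m), their m-th elements are 2a+m-2, a+m, 2a+m and 3a+2m-1.  The map h sends the
   m-th element of each of them to the m-th element of the next one, cyclically, so h is a
   product of 4-cycles, and on each set every power of h is the floor of an affine function,
   as a(m) < m phi < a(m) + 1 and phi^2 = phi + 1 show. *)

From Stdlib Require Import Reals ZArith Arith List Lra Lia Psatz ClassicalDescription.
(* Imported last, so that Defs.Rset shadows the notation Rset of the ring library. *)
From Pilot Require Import Defs.
Import ListNotations.
Open Scope R_scope.

Lemma phi_sq : phi * phi = phi + 1.
Proof. pose proof (sqrt_sqrt 5). unfold phi. nra. Qed.

Lemma mul_phi_sq x : x * phi * phi = x * phi + x.
Proof. rewrite Rmult_assoc, phi_sq. ring. Qed.

Lemma phi_bounds : 8/5 < phi < 81/50.
Proof. pose proof (sqrt_sqrt 5). pose proof (sqrt_pos 5). unfold phi. split; nra. Qed.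

Lemma floorR_spec x : IZR (floorR x) <= x < IZR (floorR x) + 1.
Proof. unfold floorR. destruct (archimed x). rewrite minus_IZR. lra. Qed.

Lemma floorR_unique x k : IZR k <= x < IZR k + 1 -> floorR x = k.
Proof.
  intros Hk. pose proof (floorR_spec x).
  assert (k < floorR x + 1)%Z by (apply lt_IZR; rewrite plus_IZR; lra).
  assert (floorR x < k + 1)%Z by (apply lt_IZR; rewrite plus_IZR; lra).
  lia.
Qed.

Lemma floorR_IZR k : floorR (IZR k) = k.
Proof. apply floorR_unique. lra. Qed.

Lemma golden_equation_no_solution (m k : Z) :
  (0 < m)%Z -> (0 < k)%Z -> (k * k <> m * k + m * m)%Z.
Proof.
  revert k. induction m as [m IH] using (well_founded_induction (Z.lt_wf 0)).
  intros k Hm Hk E.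
  assert (m < k < 2 * m)%Z by nia.
  (* descent: (k - m, m) is a smaller solution *)
  apply (IH (k - m)%Z) with m; nia.
Qed.

Lemma mul_phi_not_integer (m k : Z) : (0 < m)%Z -> IZR m * phi <> IZR k.
Proof.
  intros Hm E. pose proof phi_bounds.
  assert (Hk : (0 < k)%Z) by (apply lt_IZR; rewrite <- E; apply Rmult_lt_0_compat; [apply IZR_lt; lia | lra]).
  apply (golden_equation_no_solution m k Hm Hk), eq_IZR.
  rewrite plus_IZR, !mult_IZR, <- E.
  replace (IZR m * phi * (IZR m * phi)) with (IZR m * IZR m * (phi * phi)) by ring.
  rewrite phi_sq. ring.
Qed.

(** * The Wythoff sequences *)

Definition wythoff_a (m : Z) : Z := floorR (IZR m * phi).
Definition wythoff_b (m : Z) : Z := (wythoff_a m + m)%Z.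

Lemma wythoff_a_bounds m :
  (0 < m)%Z -> IZR (wythoff_a m) < IZR m * phi < IZR (wythoff_a m) + 1.
Proof.
  intros Hm. unfold wythoff_a.
  destruct (floorR_spec (IZR m * phi)) as [[Hlt|Heq] Hup]; [lra|].
  exfalso. exact (mul_phi_not_integer _ _ Hm (eq_sym Heq)).
Qed.

Lemma wythoff_a_lt m m' : (m < m')%Z -> (wythoff_a m < wythoff_a m')%Z.
Proof.
  intros H. assert (IZR m + 1 <= IZR m') by (rewrite <- plus_IZR; apply IZR_le; lia).
  pose proof (floorR_spec (IZR m * phi)). pose proof (floorR_spec (IZR m' * phi)).
  pose proof phi_bounds. apply lt_IZR. unfold wythoff_a. nra.
Qed.

Lemma wythoff_a_inj m m' : wythoff_a m = wythoff_a m' -> m = m'.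
Proof.
  intros E. destruct (Z.lt_trichotomy m m') as [H|[H|H]]; [|exact H|];
    apply wythoff_a_lt in H; lia.
Qed.

Lemma wythoff_b_inj m m' : wythoff_b m = wythoff_b m' -> m = m'.
Proof.
  unfold wythoff_b. intros E. destruct (Z.lt_trichotomy m m') as [H|[H|H]]; [|exact H|];
    pose proof (wythoff_a_lt _ _ H); lia.
Qed.

Lemma wythoff_a_ge m : (0 <= m)%Z -> (m <= wythoff_a m)%Z.
Proof.
  intros Hm. pose proof (floorR_spec (IZR m * phi)). pose proof phi_bounds.
  apply IZR_le in Hm.
  assert (m < wythoff_a m + 1)%Z; [|lia].
  apply lt_IZR. rewrite plus_IZR. unfold wythoff_a. nra.
Qed.

Lemma wythoff_a_pos m : (1 <= m)%Z -> (1 <= wythoff_a m)%Z.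
Proof. intros. pose proof (wythoff_a_ge m). lia. Qed.

Lemma wythoff_b_pos m : (1 <= m)%Z -> (1 <= wythoff_b m)%Z.
Proof. intros. pose proof (wythoff_a_ge m). unfold wythoff_b. lia. Qed.

Lemma wythoff_a_a m : (0 < m)%Z -> wythoff_a (wythoff_a m) = (wythoff_a m + m - 1)%Z.
Proof.
  intros Hm. pose proof (wythoff_a_bounds m Hm). pose proof (mul_phi_sq (IZR m)). pose proof phi_bounds.
  apply floorR_unique. rewrite minus_IZR, plus_IZR. split; nra.
Qed.

Lemma wythoff_a_b m : (0 < m)%Z -> wythoff_a (wythoff_b m) = (wythoff_a m + wythoff_b m)%Z.
Proof.
  intros Hm. pose proof (wythoff_a_bounds m Hm). pose proof (mul_phi_sq (IZR m)). pose proof phi_bounds.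
  apply floorR_unique. unfold wythoff_b. rewrite !plus_IZR. split; nra.
Qed.

Lemma wythoff_a_neq_b k k' : (1 <= k)%Z -> (1 <= k')%Z -> wythoff_a k <> wythoff_b k'.
Proof.
  intros Hk Hk' E. unfold wythoff_b in E.
  pose proof (wythoff_a_bounds k ltac:(lia)) as Bk. pose proof (wythoff_a_bounds k' ltac:(lia)) as Bk'.
  rewrite E, plus_IZR in Bk.
  pose proof (mul_phi_sq (IZR k)). pose proof (mul_phi_sq (IZR k')). pose proof phi_bounds.
  (* k phi and k' phi^2 both lie in (N, N + 1), N = a k = b k'; as 1/phi + 1/phi^2 = 1, so does k + k' *)
  assert (wythoff_a k' + k' < k + k')%Z by (apply lt_IZR; rewrite !plus_IZR; nra).
  assert (k + k' < wythoff_a k' + k' + 1)%Z by (apply lt_IZR; rewrite !plus_IZR; nra).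
  lia.
Qed.

Lemma wythoff_cover n : (1 <= n)%Z ->
  (exists m, (1 <= m)%Z /\ n = wythoff_a m) \/ (exists m, (1 <= m)%Z /\ n = wythoff_b m).
Proof.
  intros Hn. pose proof (mul_phi_sq (IZR n)). pose proof phi_bounds.
  set (m := floorR (IZR (n + 1) * (phi - 1))).
  destruct (floorR_spec (IZR (n + 1) * (phi - 1))) as [F1 F2]. fold m in F1, F2.
  rewrite plus_IZR in F1, F2. pose proof (mul_phi_sq (IZR m)).
  apply IZR_le in Hn.
  destruct (Rle_or_lt (IZR m * phi) (IZR n)) as [C|C].
  - right. exists (n - m)%Z.
    assert (m < n)%Z by (apply lt_IZR; nra).
    assert (wythoff_a (n - m) = m); [|unfold wythoff_b; lia].
    apply floorR_unique. rewrite minus_IZR. split; nra.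
  - left. exists m.
    assert (0 < m)%Z by (apply lt_IZR; nra).
    split; [lia|]. symmetry. apply floorR_unique. split; [lra|].
    destruct (Rle_lt_or_eq_dec (IZR m * phi) (IZR n + 1)) as [G|G]; [nra|exact G|].
    exfalso. apply (mul_phi_not_integer m (n + 1)); [lia|]. rewrite plus_IZR. exact G.
Qed.

(** * The sets R_{i,j} partitioning N, as orbits of h *)

Definition Rseq (i : nat) (j m : Z) : Z :=
  (Z.of_nat (F (S i)) * wythoff_a m + Z.of_nat (F i) * m - j)%Z.

Lemma Rset_Rseq i j x : Rset i j x <-> exists m, (1 <= m)%Z /\ x = Rseq i j m.
Proof.
  unfold Rseq, wythoff_a. split; intros [m [Hm ->]].
  - exists (Z.of_nat m). split; [lia|]. rewrite INR_IZR_INZ. reflexivity.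
  - exists (Z.to_nat m). split; [lia|]. rewrite INR_IZR_INZ, Z2Nat.id by lia. reflexivity.
Qed.

(* Indexing by k mod 4 follows the cycle R_{2,2} -> R_{1,0} -> R_{2,0} -> R_{3,1} traversed by h. *)
Definition class_index (k : nat) : nat * Z :=
  match k mod 4 with
  | 0%nat => (2%nat, 2%Z)
  | 1%nat => (1%nat, 0%Z)
  | 2%nat => (2%nat, 0%Z)
  | _ => (3%nat, 1%Z)
  end.

Definition class_set (k : nat) : Z -> Prop := Rset (fst (class_index k)) (snd (class_index k)).

Definition orbit (k : nat) (m : Z) : Z := Rseq (fst (class_index k)) (snd (class_index k)) m.

Lemma class_set_orbit k x : class_set k x <-> exists m, (1 <= m)%Z /\ x = orbit k m.
Proof. apply Rset_Rseq. Qed.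

Lemma mod4_cases k : (k mod 4 = 0 \/ k mod 4 = 1 \/ k mod 4 = 2 \/ k mod 4 = 3)%nat.
Proof. assert (k mod 4 < 4)%nat by (apply Nat.mod_upper_bound; discriminate). lia. Qed.

Lemma orbit_periodic i k m : orbit (4 * i + k)%nat m = orbit k m.
Proof.
  unfold orbit, class_index. rewrite Nat.add_comm, Nat.mul_comm, Nat.Div0.mod_add. reflexivity.
Qed.

Lemma orbit_words m : (1 <= m)%Z ->
  orbit 0 m = wythoff_a (wythoff_a (wythoff_a m)) /\ orbit 1 m = wythoff_b m /\
  orbit 2 m = wythoff_a (wythoff_b m) /\ orbit 3 m = wythoff_a (wythoff_a (wythoff_b m)).
Proof.
  intros Hm. pose proof (wythoff_a_pos m Hm). pose proof (wythoff_b_pos m Hm).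
  unfold orbit, class_index, Rseq; cbn -[wythoff_a Z.of_nat].
  rewrite !wythoff_a_a, !wythoff_a_b by lia. unfold wythoff_b. repeat split; lia.
Qed.

Lemma class_index_mod k : class_index (k mod 4) = class_index k.
Proof. unfold class_index. rewrite Nat.Div0.mod_mod. reflexivity. Qed.

Lemma orbit_mod k m : orbit (k mod 4) m = orbit k m.
Proof. unfold orbit. rewrite class_index_mod. reflexivity. Qed.

Lemma orbit_pos k m : (1 <= m)%Z -> (1 <= orbit k m)%Z.
Proof.
  intros Hm. rewrite <- orbit_mod. pose proof (orbit_words m Hm) as (W0 & W1 & W2 & W3).
  destruct (mod4_cases k) as [-> | [-> | [-> | ->]]]; [rewrite W0|rewrite W1|rewrite W2|rewrite W3];
    auto using wythoff_a_pos, wythoff_b_pos.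
Qed.

Lemma orbit_cover x : (1 <= x)%Z -> exists k m, (1 <= m)%Z /\ x = orbit k m.
Proof.
  intros Hx.
  destruct (wythoff_cover x Hx) as [[y [Hy ->]]|[m [Hm ->]]];
    [destruct (wythoff_cover y Hy) as [[z [Hz ->]]|[m [Hm ->]]];
      [destruct (wythoff_cover z Hz) as [[m [Hm ->]]|[m [Hm ->]]]|]|];
    pose proof (orbit_words m Hm) as (W0 & W1 & W2 & W3);
    [exists 0%nat | exists 3%nat | exists 2%nat | exists 1%nat];
    exists m; (split; [exact Hm | congruence]).
Qed.

Lemma orbit_inj k k' m m' : (1 <= m)%Z -> (1 <= m')%Z ->
  orbit k m = orbit k' m' -> (k mod 4 = k' mod 4)%nat /\ m = m'.
Proof.
  intros Hm Hm'. rewrite <- (orbit_mod k), <- (orbit_mod k').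
  pose proof (orbit_words m Hm) as (W0 & W1 & W2 & W3).
  pose proof (orbit_words m' Hm') as (W0' & W1' & W2' & W3').
  destruct (mod4_cases k) as [-> | [-> | [-> | ->]]], (mod4_cases k') as [-> | [-> | [-> | ->]]];
    rewrite ?W0, ?W1, ?W2, ?W3, ?W0', ?W1', ?W2', ?W3'; intros E;
    repeat apply wythoff_a_inj in E;
    first
      [ split; [reflexivity|]; first [exact E | exact (wythoff_b_inj _ _ E)]
      | exfalso; refine (wythoff_a_neq_b _ _ _ _ E)
      | exfalso; refine (wythoff_a_neq_b _ _ _ _ (eq_sym E)) ];
    auto using wythoff_a_pos, wythoff_b_pos.
Qed.

Lemma class_set_disjoint k k' x :
  class_set k x -> class_set k' x -> (k mod 4 = k' mod 4)%nat.
Proof.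
  rewrite !class_set_orbit. intros [m [Hm ->]] [m' [Hm' E]].
  exact (proj1 (orbit_inj k k' m m' Hm Hm' E)).
Qed.

Lemma partition_of_classes (ks : list nat) (f : nat -> Z * Z * Z) :
  (forall r, (r < 4)%nat -> In r ks) -> NoDup (map (fun k => k mod 4)%nat ks) ->
  is_partition_of_N (map (fun k => (class_index k, f k)) ks).
Proof.
  intros Hall Hnodup. split; [|split].
  - intros n Hn. destruct (orbit_cover (Z.of_nat n) ltac:(lia)) as [k [m [Hm E]]].
    exists (class_index (k mod 4), f (k mod 4)). split.
    + apply (in_map (fun k => (class_index k, f k))), Hall, Nat.mod_upper_bound. discriminate.
    + apply class_set_orbit. exists m. rewrite orbit_mod. auto.
  - intros p Hp x Hx. apply in_map_iff in Hp as [k [<- _]].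
    apply class_set_orbit in Hx as [m [Hm ->]]. apply orbit_pos, Hm.
  - intros i1 i2 H1 H2 Hne d x [A1 A2]. rewrite length_map in H1, H2.
    set (g := fun k => (class_index k, f k)) in *.
    rewrite (nth_indep _ (n := i1) d (g 0%nat)), map_nth in A1 by (rewrite length_map; exact H1).
    rewrite (nth_indep _ (n := i2) d (g 0%nat)), map_nth in A2 by (rewrite length_map; exact H2).
    apply Hne, (proj1 (NoDup_nth _ 0%nat) Hnodup); rewrite ?length_map; auto.
    rewrite !(map_nth (fun k => k mod 4)%nat ks 0%nat).
    exact (class_set_disjoint _ _ x A1 A2).
Qed.

(** * The powers of h *)

Definition power_coef (j k : nat) : Z * Z * Z :=
  match (j mod 4)%nat, (k mod 4)%nat with
  | 0%nat, _ => (0, 1, 0)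
  | 1%nat, 0%nat => (1, -1, 2)
  | 1%nat, (1 | 2)%nat => (1, 0, 0)
  | 1%nat, _ => (1, -1, -1)
  | 2%nat, 0%nat => (0, 1, 2)
  | 2%nat, 1%nat => (1, 1, -1)
  | 2%nat, 2%nat => (0, 1, -2)
  | 2%nat, _ => (-1, 2, 1)
  | _, 0%nat => (1, 0, 3)
  | _, 1%nat => (1, 0, -2)
  | _, _ => (1, -1, 1)
  end%Z.

Lemma piece_formula_orbit j k m : (1 <= m)%Z ->
  piece_formula (class_index k, power_coef j k) (Z.to_nat (orbit k m)) = orbit (j + k) m.
Proof.
  intros Hm. pose proof (orbit_pos k m Hm).
  unfold piece_formula. rewrite INR_IZR_INZ, Z2Nat.id by lia.
  rewrite <- (orbit_mod (j + k)), Nat.Div0.add_mod, <- (orbit_mod k).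
  pose proof (wythoff_a_bounds m ltac:(lia)). pose proof (mul_phi_sq (IZR m)). pose proof phi_bounds.
  unfold power_coef.
  destruct (mod4_cases j) as [Ej | [Ej | [Ej | Ej]]], (mod4_cases k) as [Ek | [Ek | [Ek | Ek]]];
    rewrite Ej, Ek; unfold orbit, class_index, Rseq; cbn -[wythoff_a Z.mul Z.add Z.sub IZR];
    apply floorR_unique; rewrite ?minus_IZR, ?plus_IZR, ?mult_IZR; split; nra.
Qed.

Lemma power_coef_mod j k : power_coef j (k mod 4) = power_coef j k.
Proof. unfold power_coef. rewrite Nat.Div0.mod_mod. reflexivity. Qed.

Lemma h_on_class k n :
  class_set k (Z.of_nat n) -> h n = Z.to_nat (piece_formula (class_index k, power_coef 1 k) n).
Proof.
  unfold class_set. rewrite <- class_index_mod, <- power_coef_mod.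
  assert (Hk : (k mod 4 < 4)%nat) by (apply Nat.mod_upper_bound; discriminate).
  revert Hk. generalize (k mod 4) as r. intros r Hr Hn. fold (class_set r) in Hn.
  unfold h, inR.
  destruct r as [|[|[|[|r]]]]; [| | | |lia]; cbn -[IZR phi].
  - destruct (excluded_middle_informative _) as [[C|C]|_];
      [discriminate (class_set_disjoint 0 2 _ Hn C) | discriminate (class_set_disjoint 0 1 _ Hn C) |].
    destruct (excluded_middle_informative _) as [_|C]; [|contradiction (C Hn)].
    do 2 f_equal. lra.
  - destruct (excluded_middle_informative _) as [_|C]; [|contradiction (C (or_intror Hn))].
    do 2 f_equal. lra.
  - destruct (excluded_middle_informative _) as [_|C]; [|contradiction (C (or_introl Hn))].
    do 2 f_equal. lra.
  - destruct (excluded_middle_informative _) as [[C|C]|_];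
      [discriminate (class_set_disjoint 3 2 _ Hn C) | discriminate (class_set_disjoint 3 1 _ Hn C) |].
    destruct (excluded_middle_informative _) as [C|_]; [discriminate (class_set_disjoint 3 0 _ Hn C)|].
    destruct (excluded_middle_informative _) as [_|C]; [|contradiction (C Hn)].
    do 2 f_equal. lra.
Qed.

Lemma h_orbit k m n : (1 <= m)%Z -> Z.of_nat n = orbit k m -> Z.of_nat (h n) = orbit (S k) m.
Proof.
  intros Hm En. rewrite (h_on_class k).
  - replace n with (Z.to_nat (orbit k m)) by lia.
    rewrite piece_formula_orbit by exact Hm. pose proof (orbit_pos (1 + k) m Hm).
    rewrite Z2Nat.id by lia. reflexivity.
  - apply class_set_orbit. exists m. auto.
Qed.

Lemma fpow_h_orbit j k m n : (1 <= m)%Z -> Z.of_nat n = orbit k m ->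
  Z.of_nat (fpow h j n) = orbit (j + k) m.
Proof.
  intros Hm En. induction j as [|j IH]; [exact En|].
  exact (h_orbit (j + k) m _ Hm IH).
Qed.

Lemma fpow_h_on_class j k n : class_set k (Z.of_nat n) ->
  Z.of_nat (fpow h j n) = piece_formula (class_index k, power_coef j k) n.
Proof.
  intros Hn. apply class_set_orbit in Hn as [m [Hm En]].
  rewrite (fpow_h_orbit j k m n Hm En).
  replace n with (Z.to_nat (orbit k m)) by lia.
  rewrite piece_formula_orbit by exact Hm. reflexivity.
Qed.

Lemma orbit_cover_nat n : (1 <= n)%nat -> exists k m, (1 <= m)%Z /\ Z.of_nat n = orbit k m.
Proof. intros Hn. apply orbit_cover. lia. Qed.

Lemma fpow_h_pos j n : (1 <= n)%nat -> (1 <= fpow h j n)%nat.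
Proof.
  intros Hn. destruct (orbit_cover_nat n Hn) as [k [m [Hm En]]].
  pose proof (fpow_h_orbit j k m n Hm En). pose proof (orbit_pos (j + k) m Hm). lia.
Qed.

Lemma fpow_h_period i n : (1 <= n)%nat -> fpow h (4 * i) n = n.
Proof.
  intros Hn. destruct (orbit_cover_nat n Hn) as [k [m [Hm En]]].
  pose proof (fpow_h_orbit (4 * i) k m n Hm En) as E. rewrite orbit_periodic in E. lia.
Qed.

Lemma fpow_add (f : nat -> nat) a b n : fpow f a (fpow f b n) = fpow f (a + b) n.
Proof. symmetry. apply Nat.iter_add. Qed.

Lemma fpow_h_inverse j n : (1 <= n)%nat ->
  fpow h (3 * j) (fpow h j n) = n /\ fpow h j (fpow h (3 * j) n) = n.
Proof.
  intros Hn. rewrite !fpow_add, Nat.add_comm.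
  replace (3 * j + j)%nat with (4 * j)%nat by lia. split; apply fpow_h_period, Hn.
Qed.

Lemma perm_N_fpow_h j : perm_N (fpow h j).
Proof.
  split; [|split].
  - apply fpow_h_pos.
  - intros n n' Hn Hn' E.
    rewrite <- (proj1 (fpow_h_inverse j n Hn)), <- (proj1 (fpow_h_inverse j n' Hn')), E.
    reflexivity.
  - intros n Hn. exists (fpow h (3 * j) n).
    split; [apply fpow_h_pos, Hn | apply fpow_h_inverse, Hn].
Qed.

Definition h_pieces (j : nat) : list piece :=
  map (fun k => (class_index k, power_coef j k)) [2; 1; 0; 3]%nat.

Lemma h_pieces_partition j : is_partition_of_N (h_pieces j).
Proof.
  apply partition_of_classes.
  - intros r Hr. cbn. lia.
  - cbn. repeat constructor; cbn; lia.
Qed.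

Lemma RPerm_fpow_h j : RPerm (fpow h j).
Proof.
  split; [apply perm_N_fpow_h|]. exists (h_pieces j). split; [apply h_pieces_partition|].
  intros p Hp n _ Hn. apply in_map_iff in Hp as [k [<- _]].
  exact (fpow_h_on_class j k n Hn).
Qed.

Lemma wythoff_a_small : wythoff_a 1 = 1%Z /\ wythoff_a 2 = 3%Z /\ wythoff_a 3 = 4%Z /\ wythoff_a 4 = 6%Z.
Proof. pose proof phi_bounds. repeat split; apply floorR_unique; split; lra. Qed.

Lemma orbit_0_1 : orbit 0 1 = 1%Z.
Proof.
  unfold orbit, class_index, Rseq. cbn -[wythoff_a Z.mul Z.add Z.sub].
  rewrite (proj1 wythoff_a_small). reflexivity.
Qed.

Lemma h_has_order_4 : has_order h 4.
Proof.
  split; [lia|split]; [intros n; exact (fpow_h_period 1 n)|].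
  intros l Hl1 Hl4. exists 1%nat. split; [lia|]. intros E.
  assert (E1 : Z.of_nat 1 = orbit 0 1) by (rewrite orbit_0_1; reflexivity).
  pose proof (fpow_h_orbit l 0 1 1 ltac:(lia) E1) as El. rewrite E, E1 in El.
  destruct (orbit_inj 0 (l + 0) 1 1) as [Emod _]; [lia | lia | exact El|].
  destruct l as [|[|[|[|l]]]]; [lia | discriminate | discriminate | discriminate | lia].
Qed.

Lemma h_value k m n v : (1 <= m)%Z -> Z.of_nat n = orbit k m -> Z.of_nat v = orbit (S k) m -> h n = v.
Proof. intros Hm En Ev. apply Nat2Z.inj. rewrite Ev. exact (h_orbit k m n Hm En). Qed.

Lemma h_first_values : map h (seq 1 10) = [2; 3; 4; 1; 8; 5; 11; 12; 7; 16]%nat.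
Proof.
  destruct wythoff_a_small as (A1 & A2 & A3 & A4). cbn [map seq].
  rewrite (h_value 0 1 1 2), (h_value 1 1 2 3), (h_value 2 1 3 4), (h_value 3 1 4 1),
    (h_value 1 2 5 8), (h_value 0 2 6 5), (h_value 1 3 7 11), (h_value 2 2 8 12),
    (h_value 0 3 9 7), (h_value 1 4 10 16)
    by (try lia; unfold orbit, class_index, Rseq; cbn -[wythoff_a Z.mul Z.add Z.sub];
        rewrite ?A1, ?A2, ?A3, ?A4; reflexivity).
  reflexivity.
Qed.

Lemma h_square_on_classes n :
  (inR 1 0 n -> Z.of_nat (fpow h 2 n) = floorR ((phi + 1) * INR n - 1)) /\
  (inR 2 2 n -> fpow h 2 n = (n + 2)%nat) /\
  (inR 2 0 n -> Z.of_nat (fpow h 2 n) = (Z.of_nat n - 2)%Z) /\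
  (inR 3 1 n -> Z.of_nat (fpow h 2 n) = floorR ((2 - phi) * INR n + 1)).
Proof.
  repeat split; intros Hn.
  - rewrite (fpow_h_on_class 2 1 n Hn). cbn -[IZR phi]. f_equal. lra.
  - apply Nat2Z.inj. rewrite (fpow_h_on_class 2 0 n Hn), Nat2Z.inj_add. cbn -[IZR phi].
    rewrite <- floorR_IZR, plus_IZR, <- INR_IZR_INZ. f_equal. lra.
  - rewrite (fpow_h_on_class 2 2 n Hn). cbn -[IZR phi].
    rewrite <- floorR_IZR, minus_IZR, <- INR_IZR_INZ. f_equal. lra.
  - rewrite (fpow_h_on_class 2 3 n Hn). cbn -[IZR phi]. f_equal. lra.
Qed.

Lemma h_cube_on_classes n :
  (inR 2 2 n -> Z.of_nat (fpow h 3 n) = floorR (phi * INR n + 3)) /\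
  (inR 1 0 n -> Z.of_nat (fpow h 3 n) = floorR (phi * INR n - 2)) /\
  ((inR 3 1 n \/ inR 2 0 n) -> Z.of_nat (fpow h 3 n) = floorR ((phi - 1) * INR n + 1)).
Proof.
  repeat split; [intros Hn | intros Hn | intros [Hn|Hn]].
  - rewrite (fpow_h_on_class 3 0 n Hn). cbn -[IZR phi]. f_equal. lra.
  - rewrite (fpow_h_on_class 3 1 n Hn). cbn -[IZR phi]. f_equal. lra.
  - rewrite (fpow_h_on_class 3 3 n Hn). cbn -[IZR phi]. f_equal. lra.
  - rewrite (fpow_h_on_class 3 2 n Hn). cbn -[IZR phi]. f_equal. lra.
Qed.

Theorem theorem4p3 :
  (* the four sets in the definition of h partition N *)
  is_partition_of_N
    [((2%nat, 0%Z), (1%Z, 0%Z, 0%Z)); ((1%nat, 0%Z), (1%Z, 0%Z, 0%Z));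
     ((2%nat, 2%Z), (1%Z, (-1)%Z, 2%Z)); ((3%nat, 1%Z), (1%Z, (-1)%Z, (-1)%Z))] /\
  (* h is an R_{i,j}-permutation of order 4 *)
  RPerm h /\ has_order h 4 /\
  (* first values *)
  map h (seq 1 10) = [2; 3; 4; 1; 8; 5; 11; 12; 7; 16]%nat /\
  (* h^2 *)
  RPerm (fpow h 2) /\
  (forall n : nat, (1 <= n)%nat ->
     (inR 1 0 n -> Z.of_nat (fpow h 2 n) = floorR ((phi + 1) * INR n - 1)) /\
     (inR 2 2 n -> fpow h 2 n = (n + 2)%nat) /\
     (inR 2 0 n -> Z.of_nat (fpow h 2 n) = (Z.of_nat n - 2)%Z) /\
     (inR 3 1 n -> Z.of_nat (fpow h 2 n) = floorR ((2 - phi) * INR n + 1))) /\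
  (* h^3 = h^{-1} *)
  RPerm (fpow h 3) /\
  (forall n : nat, (1 <= n)%nat -> fpow h 3 (h n) = n /\ h (fpow h 3 n) = n) /\
  (forall n : nat, (1 <= n)%nat ->
     (inR 2 2 n -> Z.of_nat (fpow h 3 n) = floorR (phi * INR n + 3)) /\
     (inR 1 0 n -> Z.of_nat (fpow h 3 n) = floorR (phi * INR n - 2)) /\
     ((inR 3 1 n \/ inR 2 0 n) ->
        Z.of_nat (fpow h 3 n) = floorR ((phi - 1) * INR n + 1))).
Proof.
  split; [exact (h_pieces_partition 1)|].
  split; [exact (RPerm_fpow_h 1)|].
  split; [exact h_has_order_4|].
  split; [exact h_first_values|].
  split; [exact (RPerm_fpow_h 2)|].
  split; [intros n _; apply h_square_on_classes|].
  split; [exact (RPerm_fpow_h 3)|].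
  split; [intros n Hn; exact (fpow_h_inverse 1 n Hn)|].
  intros n _. apply h_cube_on_classes.
Qed.
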